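(* Let $k\ge1$ be an integer and $a,b,c\in\mathbb{C}$ with $a-b,\ a-c,\ a-b+1,\ a-c+1\notin\{0,-1,-2,\dots\}$, $b+c+k\neq0$, and $\mathrm{Re}(a-2b-2c-2k)>1$. Define $$G_k(a,b,c)={}_3F_2\!\left(\left.\begin{array}{c}a,\ b+k,\ c+k\\ a-b+1,\ a-c+1\end{array}\right|1\right).$$ Then $$G_{k+1}(a,b,c)=\frac{a\,[a-1-2(b+c+k)]}{k\,(b+c+k)}\,G_k(a+1,b+1,c+1)-\frac{(a-b)(a-c)}{k\,(b+c+k)}\,G_k(a-1,b,c).$$
   Context: ${}_3F_2(a_1,a_2,a_3;b_1,b_2;1)=\sum_{m\ge0}\frac{(a_1)_m(a_2)_m(a_3)_m}{m!\,(b_1)_m(b_2)_m}$ with $(\alpha)_m=\Gamma(\alpha+m)/\Gamma(\alpha)$, absolutely convergent when $\mathrm{Re}(b_1+b_2-a_1-a_2-a_3)>0$. Note $G_k(a+1,b+1,c+1)={}_3F_2(a+1,b+k+1,c+k+1;a-b+1,a-c+1;1)$ and $G_k(a-1,b,c)={}_3F_2(a-1,b+k,c+k;a-b,a-c;1)$. *)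

From Stdlib Require Import Reals.
Open Scope R_scope.

Record Cplx : Type := mkC { Re : R ; Im : R }.

Definition Czero : Cplx := mkC 0 0.
Definition Cone : Cplx := mkC 1 0.
Definition RtoC (x : R) : Cplx := mkC x 0.
Definition NtoC (n : nat) : Cplx := RtoC (INR n).
Definition Cadd (z w : Cplx) : Cplx := mkC (Re z + Re w) (Im z + Im w).
Definition Copp (z : Cplx) : Cplx := mkC (- Re z) (- Im z).
Definition Csub (z w : Cplx) : Cplx := Cadd z (Copp w).
Definition Cmul (z w : Cplx) : Cplx :=
  mkC (Re z * Re w - Im z * Im w) (Re z * Im w + Im z * Re w).
Definition Cinv (z : Cplx) : Cplx :=
  mkC (Re z / (Re z * Re z + Im z * Im z)) (- Im z / (Re z * Re z + Im z * Im z)).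
Definition Cdiv (z w : Cplx) : Cplx := Cmul z (Cinv w).

Fixpoint poch (alpha : Cplx) (m : nat) : Cplx :=
  match m with
  | O => Cone
  | S m' => Cmul (poch alpha m') (Cadd alpha (NtoC m'))
  end.

Definition F32_term (a1 a2 a3 b1 b2 : Cplx) (m : nat) : Cplx :=
  Cdiv (Cmul (Cmul (poch a1 m) (poch a2 m)) (poch a3 m))
       (Cmul (Cmul (NtoC (Factorial.fact m)) (poch b1 m)) (poch b2 m)).

Fixpoint F32_partial (a1 a2 a3 b1 b2 : Cplx) (n : nat) : Cplx :=
  match n with
  | O => F32_term a1 a2 a3 b1 b2 0
  | S n' => Cadd (F32_partial a1 a2 a3 b1 b2 n') (F32_term a1 a2 a3 b1 b2 n)
  end.

Definition F32_sum (a1 a2 a3 b1 b2 : Cplx) (S : Cplx) : Prop :=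
  Un_cv (fun n => Re (F32_partial a1 a2 a3 b1 b2 n)) (Re S) /\
  Un_cv (fun n => Im (F32_partial a1 a2 a3 b1 b2 n)) (Im S).

Definition G_sum (k : nat) (a b c : Cplx) (S : Cplx) : Prop :=
  F32_sum a (Cadd b (NtoC k)) (Cadd c (NtoC k))
          (Cadd (Csub a b) Cone) (Cadd (Csub a c) Cone) S.

Definition not_nonpos_int (z : Cplx) : Prop := forall n : nat, z <> Copp (NtoC n).

From Stdlib Require Import Reals Lra Lia Psatz Field.
Open Scope R_scope.

(* Let [t n] be the [n]-th term of [G_{k+1}(a,b,c)].  The [n]-th terms of the three series
   are rational multiples of [t n] (contiguity of Pochhammer symbols), and the combination
   [k (b+c+k) G_{k+1}(a,b,c) - a (a-1-2(b+c+k)) G_k(a+1,b+1,c+1) + (a-b)(a-c) G_k(a-1,b,c)]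
   of their [n]-th partial sums telescopes to [R n * t n], with
   [R n = (n+a)(n+b+c+2k+1) + (b+k)(c+k)].  For a [3F2] at 1 with excess
   [s = Re(b1+b2-a1-a2-a3)] the ratio [|t (n+1) / t n|] behaves like [1 - (1+s)/n]; a
   Raabe-type comparison then gives convergence when [s > 0], and [n^2 |t n| -> 0] when
   [s > 1], which is the case for [G_{k+1}(a,b,c)] where [s = Re(a-2b-2c-2k)].  Hence
   [R n * t n -> 0] and the combination of the three sums vanishes. *)

Lemma Cplx_eq (z w : Cplx) : Re z = Re w -> Im z = Im w -> z = w.
Proof. destruct z, w; cbn; intros -> ->; reflexivity. Qed.

Ltac Cplx_ext :=
  apply Cplx_eq; cbn [Re Im Cadd Cmul Csub Copp Czero Cone RtoC NtoC Cinv Cdiv]; try ring.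

Definition Cnorm2 (z : Cplx) : R := Re z * Re z + Im z * Im z.

Lemma Cnorm2_ge0 (z : Cplx) : 0 <= Cnorm2 z.
Proof. unfold Cnorm2; nra. Qed.

Lemma Cnorm2_eq0 (z : Cplx) : Cnorm2 z = 0 -> z = Czero.
Proof. unfold Cnorm2; intro H; Cplx_ext; nra. Qed.

Lemma Cnorm2_mul (z w : Cplx) : Cnorm2 (Cmul z w) = Cnorm2 z * Cnorm2 w.
Proof. unfold Cnorm2; cbn; ring. Qed.

Lemma Cplx_ring_theory : ring_theory Czero Cone Cadd Cmul Csub Copp (@eq Cplx).
Proof. constructor; intros; unfold Csub; Cplx_ext. Qed.

Lemma Cplx_field_theory :
  field_theory Czero Cone Cadd Cmul Csub Copp Cdiv Cinv (@eq Cplx).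
Proof.
  constructor.
  - exact Cplx_ring_theory.
  - intro H; injection H; lra.
  - reflexivity.
  - intros z Hz.
    assert (Hn : Cnorm2 z <> 0) by (intro E; apply Hz, Cnorm2_eq0, E).
    unfold Cnorm2 in Hn; Cplx_ext; field; exact Hn.
Qed.

Add Field Cplx_field : Cplx_field_theory.

Lemma Cnorm2_pos (z : Cplx) : z <> Czero -> 0 < Cnorm2 z.
Proof.
  intro Hz; destruct (Cnorm2_ge0 z) as [|E]; [assumption|].
  exfalso; apply Hz, Cnorm2_eq0; symmetry; exact E.
Qed.

Lemma Cinv_0 : Cinv Czero = Czero.
Proof. Cplx_ext; unfold Rdiv; rewrite ?Rmult_0_l, ?Rplus_0_l, ?Rinv_0; ring. Qed.

(* No side condition: with the junk value [Cinv Czero = Czero] both sides vanish. *)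
Lemma Cinv_mul (z w : Cplx) : Cinv (Cmul z w) = Cmul (Cinv z) (Cinv w).
Proof.
  destruct (Req_dec (Cnorm2 z) 0) as [Hz|Hz].
  { apply Cnorm2_eq0 in Hz; subst z.
    replace (Cmul Czero w) with Czero by ring; rewrite Cinv_0; ring. }
  destruct (Req_dec (Cnorm2 w) 0) as [Hw|Hw].
  { apply Cnorm2_eq0 in Hw; subst w.
    replace (Cmul z Czero) with Czero by ring; rewrite Cinv_0; ring. }
  field; split; intros ->; [apply Hw | apply Hz]; unfold Cnorm2; cbn; ring.
Qed.

Lemma NtoC_0 : NtoC 0 = Czero.
Proof. Cplx_ext; simpl; ring. Qed.

Lemma NtoC_S (m : nat) : NtoC (S m) = Cadd (NtoC m) Cone.
Proof. Cplx_ext; rewrite S_INR; ring. Qed.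

Lemma NtoC_mul (m n : nat) : NtoC (m * n) = Cmul (NtoC m) (NtoC n).
Proof. Cplx_ext; rewrite mult_INR; ring. Qed.

Lemma NtoC_S_neq0 (m : nat) : NtoC (S m) <> Czero.
Proof.
  intro E; apply (f_equal Re) in E; cbn [NtoC RtoC Re Czero] in E.
  pose proof (lt_0_INR (S m) (Nat.lt_0_succ m)); lra.
Qed.

Lemma Cadd_1_NtoC (z : Cplx) (m : nat) : Cadd (Cadd z Cone) (NtoC m) = Cadd z (NtoC (S m)).
Proof. rewrite NtoC_S; ring. Qed.

Lemma Cadd_NtoC_1 (z : Cplx) (m : nat) : Cadd (Cadd z (NtoC m)) Cone = Cadd z (NtoC (S m)).
Proof. rewrite NtoC_S; ring. Qed.

Lemma not_nonpos_int_add (z : Cplx) (m : nat) :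
  not_nonpos_int z -> Cadd z (NtoC m) <> Czero.
Proof.
  intros Hz E; apply (Hz m).
  replace z with (Csub (Cadd z (NtoC m)) (NtoC m)) by ring; rewrite E; ring.
Qed.

Lemma not_nonpos_int_succ (z : Cplx) : not_nonpos_int z -> not_nonpos_int (Cadd z Cone).
Proof.
  intros Hz n E; apply (Hz (S n)).
  replace z with (Csub (Cadd z Cone) Cone) by ring; rewrite E, NtoC_S; ring.
Qed.

Lemma not_nonpos_int_neq0 (z : Cplx) : not_nonpos_int z -> z <> Czero.
Proof.
  intros Hz E; apply (not_nonpos_int_add z 0 Hz); rewrite E, NtoC_0; ring.
Qed.

(** * Pochhammer symbols and the terms of a [3F2] series *)

Lemma poch_shift (x : Cplx) (m : nat) :
  Cmul x (poch (Cadd x Cone) m) = Cmul (poch x m) (Cadd x (NtoC m)).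
Proof.
  induction m as [|m IH]; cbn [poch].
  - rewrite NtoC_0; ring.
  - rewrite NtoC_S.
    transitivity (Cmul (Cmul x (poch (Cadd x Cone) m)) (Cadd (Cadd x Cone) (NtoC m)));
      [ring|rewrite IH; ring].
Qed.

Lemma poch_succ (x : Cplx) (m : nat) : poch x (S m) = Cmul x (poch (Cadd x Cone) m).
Proof. rewrite poch_shift; reflexivity. Qed.

Lemma F32_term_0 (a1 a2 a3 b1 b2 : Cplx) : F32_term a1 a2 a3 b1 b2 0 = Cone.
Proof.
  unfold F32_term, Cdiv; cbn [poch Factorial.fact].
  replace (NtoC 1) with Cone by (Cplx_ext; simpl; ring).
  field; intro E; injection E; lra.
Qed.

Lemma F32_term_succ (a1 a2 a3 b1 b2 : Cplx) (m : nat) :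
  F32_term a1 a2 a3 b1 b2 (S m) =
  Cdiv (Cmul (F32_term a1 a2 a3 b1 b2 m)
             (Cmul (Cmul (Cadd a1 (NtoC m)) (Cadd a2 (NtoC m))) (Cadd a3 (NtoC m))))
       (Cmul (NtoC (S m)) (Cmul (Cadd b1 (NtoC m)) (Cadd b2 (NtoC m)))).
Proof.
  unfold F32_term, Cdiv; cbn [poch].
  change (Factorial.fact (S m)) with (S m * Factorial.fact m)%nat; rewrite NtoC_mul.
  set (X := Cmul (NtoC (S m)) (Cmul (Cadd b1 (NtoC m)) (Cadd b2 (NtoC m)))).
  set (D := Cmul (Cmul (NtoC (Factorial.fact m)) (poch b1 m)) (poch b2 m)).
  replace (Cmul (Cmul (Cmul (NtoC (S m)) (NtoC (Factorial.fact m)))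
                      (Cmul (poch b1 m) (Cadd b1 (NtoC m))))
                (Cmul (poch b2 m) (Cadd b2 (NtoC m))))
    with (Cmul D X) by (unfold D, X; ring).
  rewrite Cinv_mul; ring.
Qed.

Lemma Rabs_le_between (x y : R) : Rabs x <= y -> - y <= x <= y.
Proof.
  intro H; pose proof (Rle_abs x); pose proof (Rle_abs (- x)); rewrite Rabs_Ropp in *; lra.
Qed.

Lemma Un_cv_const (c : R) : Un_cv (fun _ => c) c.
Proof. intros eps Heps; exists O; intros; unfold R_dist; rewrite Rminus_diag, Rabs_R0; lra. Qed.

Lemma Un_cv_scal (u : nat -> R) (l c : R) : Un_cv u l -> Un_cv (fun n => c * u n) (c * l).
Proof. apply CV_mult, Un_cv_const. Qed.

Lemma Un_cv_0_dominated (u x : nat -> R) (C : R) (N : nat) :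
  (forall n, (N <= n)%nat -> Rabs (u n) <= C * x n) -> Un_cv x 0 -> Un_cv u 0.
Proof.
  intros Hb Hx eps Heps.
  assert (HCx := Un_cv_scal x 0 C Hx); rewrite Rmult_0_r in HCx.
  destruct (HCx eps Heps) as [N1 HN1]; exists (max N N1); intros n Hn.
  specialize (HN1 n ltac:(lia)); specialize (Hb n ltac:(lia)).
  unfold R_dist in *; rewrite Rminus_0_r in *.
  pose proof (Rle_abs (C * x n)); lra.
Qed.

Lemma summable_of_Rabs_le (u w : nat -> R) :
  (forall n, Rabs (u n) <= w n) -> {l | Un_cv (sum_f_R0 w) l} -> {l | Un_cv (sum_f_R0 u) l}.
Proof.
  intros Hb [lw Hw].
  (* compare [0 <= u + w] with [2 w] *)
  destruct (Rseries_CV_comp (fun n => u n + w n) (fun n => w n * 2)) as [l Hl].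
  { intro n; specialize (Hb n); apply Rabs_le_between in Hb; lra. }
  { exists (2 * lw); apply Un_cv_ext with (fun n => 2 * sum_f_R0 w n).
    - intro n; apply scal_sum.
    - apply Un_cv_scal, Hw. }
  exists (l - lw); apply Un_cv_ext with (fun n => sum_f_R0 (fun i => u i + w i) n - sum_f_R0 w n).
  - intro n; rewrite plus_sum; ring.
  - apply CV_minus; assumption.
Qed.

Lemma Raabe_summable (w : nat -> R) (d : R) (M : nat) :
  0 < d -> (forall n, 0 <= w n) ->
  (forall m, (M <= m)%nat -> (INR m + 1 + d) * w (S m) <= INR m * w m) ->
  {l | Un_cv (sum_f_R0 w) l}.
Proof.
  intros Hd Hw Hr.
  assert (Hgrow : Un_growing (sum_f_R0 w)) by (intro n; cbn [sum_f_R0]; specialize (Hw (S n)); lra).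
  apply growing_cv; [exact Hgrow|].
  assert (Htele : forall j, d * (sum_f_R0 w (M + j) - sum_f_R0 w M) + INR (M + j) * w (M + j)%nat
                            <= INR M * w M).
  { induction j as [|j IH]; [rewrite Nat.add_0_r; lra|].
    rewrite Nat.add_succ_r; cbn [sum_f_R0]; rewrite S_INR.
    specialize (Hr (M + j)%nat ltac:(lia)); lra. }
  assert (Hbound : 0 <= INR M * w M / d).
  { apply Rle_mult_inv_pos; [apply Rmult_le_pos; [apply pos_INR|apply Hw]|exact Hd]. }
  exists (sum_f_R0 w M + INR M * w M / d); intros x [n ->].
  destruct (Compare_dec.le_lt_dec M n) as [HMn|HnM].
  - specialize (Htele (n - M)%nat); replace (M + (n - M))%nat with n in Htele by lia.
    assert (0 <= INR n * w n) by (apply Rmult_le_pos; [apply pos_INR|apply Hw]).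
    assert (d * (INR M * w M / d) = INR M * w M) by (field; lra).
    nra.
  - pose proof (growing_prop _ M n Hgrow ltac:(lia)); lra.
Qed.

Lemma pow_ratio_le (r d : R) (N : nat) :
  0 < r -> 0 < d -> 1 <= INR N * d -> (r / (r + d)) ^ N * (r + 1) <= r.
Proof.
  intros Hr Hd HN.
  (* Bernoulli's inequality: [(1 + d / r) ^ N >= 1 + N d / r >= 1 + 1 / r] *)
  assert (Hq : 1 + / r <= (1 + d / r) ^ N).
  { eapply Rle_trans; [|apply poly, Rdiv_lt_0_compat; lra].
    replace (INR N * (d / r)) with (INR N * d * / r) by (field; lra).
    pose proof (Rinv_0_lt_compat r Hr); nra. }
  replace (r / (r + d)) with (/ (1 + d / r)) by (field; lra).
  rewrite pow_inv.
  set (q := (1 + d / r) ^ N) in *.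
  assert (r * / r = 1) by (field; lra).
  assert (Hq0 : 0 < q) by (pose proof (Rinv_0_lt_compat r Hr); lra).
  apply Rmult_le_reg_l with q; [exact Hq0|].
  rewrite <- Rmult_assoc, Rinv_r by lra; nra.
Qed.

Lemma Un_cv_0_of_pow_mul_bounded (x : nat -> R) (N M : nat) (C : R) :
  (forall n, 0 <= x n) -> (forall n, (M <= n)%nat -> x n ^ N * (INR n + 1) <= C) -> Un_cv x 0.
Proof.
  intros Hx HC eps Heps.
  assert (HeN : 0 < eps ^ N) by (apply pow_lt; lra).
  destruct (INR_unbounded (C / eps ^ N)) as [K HK].
  exists (max K M); intros n Hn; unfold R_dist.
  rewrite Rminus_0_r, Rabs_right by (apply Rle_ge, Hx).
  specialize (HC n ltac:(lia)).
  assert (HKn : INR K <= INR n) by (apply le_INR; lia).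
  assert (C < eps ^ N * INR K).
  { apply (Rmult_lt_compat_r (eps ^ N)) in HK; [|exact HeN].
    unfold Rdiv in HK; rewrite Rmult_assoc, Rinv_l, Rmult_1_r in HK by lra; lra. }
  destruct (Rlt_le_dec (x n) eps) as [|Hge]; [assumption|].
  assert (eps ^ N <= x n ^ N) by (apply pow_incr; lra).
  assert (eps ^ N * (INR n + 1) <= x n ^ N * (INR n + 1))
    by (apply Rmult_le_compat_r; [pose proof (pos_INR n)|]; lra).
  assert (eps ^ N * INR K <= eps ^ N * INR n) by (apply Rmult_le_compat_l; lra).
  lra.
Qed.

Lemma Raabe_vanishing (x : nat -> R) (d : R) (M : nat) :
  0 < d -> (forall n, 0 <= x n) ->
  (forall m, (M <= m)%nat -> x (S m) * (INR m + 1 + d) <= x m * (INR m + 1)) ->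
  Un_cv x 0.
Proof.
  intros Hd Hx Hr.
  (* choose [N d >= 1], so that [x ^ N] decays at least like [1 / (m + 1)] *)
  destruct (INR_unbounded (/ d)) as [N HN].
  assert (HNd : 1 <= INR N * d).
  { apply (Rmult_lt_compat_r d) in HN; [rewrite Rinv_l in HN; lra | exact Hd]. }
  assert (Hmono : forall m, (M <= m)%nat ->
                  x (S m) ^ N * (INR (S m) + 1) <= x m ^ N * (INR m + 1)).
  { intros m Hm; rewrite S_INR; specialize (Hr m Hm).
    set (r := INR m + 1) in *.
    assert (Hr0 : 0 < r) by (pose proof (pos_INR m); unfold r; lra).
    assert (Hq0 : 0 <= r / (r + d)) by (apply Rle_mult_inv_pos; lra).
    assert (Hstep : x (S m) <= x m * (r / (r + d))).
    { apply Rmult_le_reg_r with (r + d); [lra|].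
      replace (x m * (r / (r + d)) * (r + d)) with (x m * r) by (field; lra); lra. }
    assert (HstepN : x (S m) ^ N <= x m ^ N * (r / (r + d)) ^ N).
    { rewrite <- Rpow_mult_distr; apply pow_incr; split; [apply Hx|exact Hstep]. }
    pose proof (pow_ratio_le r d N Hr0 Hd HNd).
    assert (0 <= x m ^ N) by (apply pow_le, Hx).
    apply Rle_trans with (x m ^ N * (r / (r + d)) ^ N * (r + 1)); [apply Rmult_le_compat_r; lra|].
    rewrite Rmult_assoc; apply Rmult_le_compat_l; lra. }
  apply (Un_cv_0_of_pow_mul_bounded x N M (x M ^ N * (INR M + 1)) Hx).
  intros n Hn; induction Hn as [|n Hn IH]; [lra|].
  specialize (Hmono n Hn); lra.
Qed.

(** * Eventual comparison of polynomials *)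

Definition near_one (f : R -> R) (a H : R) : Prop :=
  0 <= H /\ forall x, 0 <= x <= 1 -> Rabs (f x - 1 - a * x) <= H * x ^ 2.

Lemma near_one_quadratic (u v : R) : near_one (fun x => 1 + u * x + v * x ^ 2) u (Rabs v).
Proof.
  split; [apply Rabs_pos|]; intros x Hx.
  replace (1 + u * x + v * x ^ 2 - 1 - u * x) with (v * x ^ 2) by ring.
  rewrite Rabs_mult, (Rabs_right (x ^ 2)); [lra | apply Rle_ge, pow_le; lra].
Qed.

Lemma Rabs_mul_le (p q P Q : R) : Rabs p <= P -> Rabs q <= Q -> Rabs (p * q) <= P * Q.
Proof. intros; rewrite Rabs_mult; apply Rmult_le_compat; auto using Rabs_pos. Qed.

Lemma near_one_mul (f g : R -> R) (a b Hf Hg : R) :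
  near_one f a Hf -> near_one g b Hg ->
  near_one (fun x => f x * g x) (a + b)
           (Rabs a * Rabs b + Hf + Hg + Rabs a * Hg + Rabs b * Hf + Hf * Hg).
Proof.
  intros [Hf0 HF] [Hg0 HG]; split.
  { pose proof (Rabs_pos a); pose proof (Rabs_pos b); nra. }
  intros x Hx; specialize (HF x Hx); specialize (HG x Hx).
  set (rf := f x - 1 - a * x) in *; set (rg := g x - 1 - b * x) in *.
  replace (f x * g x - 1 - (a + b) * x)
    with (a * x * (b * x) + rf + rg + a * x * rg + b * x * rf + rf * rg)
    by (unfold rf, rg; ring).
  (* on [0, 1] the remainders are also [O(x)], which makes every product [O(x^2)] *)
  assert (Hxx : x ^ 2 <= x) by (cbn; nra).
  assert (Hrf : Rabs rf <= Hf * x) by nra.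
  assert (Hrg : Rabs rg <= Hg * x) by nra.
  assert (Hax : Rabs (a * x) <= Rabs a * x) by (rewrite Rabs_mult, (Rabs_right x); lra).
  assert (Hbx : Rabs (b * x) <= Rabs b * x) by (rewrite Rabs_mult, (Rabs_right x); lra).
  pose proof (Rabs_mul_le _ _ _ _ Hax Hbx); pose proof (Rabs_mul_le _ _ _ _ Hax Hrg).
  pose proof (Rabs_mul_le _ _ _ _ Hbx Hrf); pose proof (Rabs_mul_le _ _ _ _ Hrf Hrg).
  pose proof (Rabs_triang (a * x * (b * x) + rf + rg + a * x * rg + b * x * rf) (rf * rg)).
  pose proof (Rabs_triang (a * x * (b * x) + rf + rg + a * x * rg) (b * x * rf)).
  pose proof (Rabs_triang (a * x * (b * x) + rf + rg) (a * x * rg)).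
  pose proof (Rabs_triang (a * x * (b * x) + rf) rg).
  pose proof (Rabs_triang (a * x * (b * x)) rf).
  nra.
Qed.

Lemma near_one_eventually_le (fL fR : R -> R) (aL aR HL HR : R) :
  near_one fL aL HL -> near_one fR aR HR -> aL < aR ->
  exists K, 1 <= K /\ forall r, K <= r -> fL (/ r) <= fR (/ r).
Proof.
  intros [HL0 NL] [HR0 NR] Ha.
  assert (HK : 0 <= (HL + HR) / (aR - aL)) by (apply Rle_mult_inv_pos; lra).
  exists (1 + (HL + HR) / (aR - aL)); split; [lra|]; intros r Hr.
  assert (Hx : 0 <= / r <= 1).
  { split; [left; apply Rinv_0_lt_compat; lra|].
    rewrite <- Rinv_1; apply Rinv_le_contravar; lra. }
  specialize (NL (/ r) Hx); specialize (NR (/ r) Hx); apply Rabs_le_between in NL, NR.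
  (* [fR x - fL x >= x ((aR - aL) - (HL + HR) x)] with [x = / r], and the bracket is positive *)
  assert (Hpos : (HL + HR) * / r <= aR - aL).
  { apply (Rmult_le_reg_r r); [lra|].
    rewrite Rmult_assoc, Rinv_l, Rmult_1_r by lra.
    apply (Rmult_le_compat_r (aR - aL)) in Hr; [|lra].
    replace ((1 + (HL + HR) / (aR - aL)) * (aR - aL)) with (aR - aL + (HL + HR)) in Hr
      by (field; lra).
    lra. }
  assert (0 <= / r * ((aR - aL) - (HL + HR) * / r)) by (apply Rmult_le_pos; lra).
  nra.
Qed.

Lemma Cnorm2_add_RtoC (z : Cplx) (r : R) :
  0 < r -> Cnorm2 (Cadd z (RtoC r)) = r ^ 2 * (1 + 2 * Re z * / r + Cnorm2 z * (/ r) ^ 2).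
Proof. intro Hr; unfold Cnorm2; cbn; field; lra. Qed.

Lemma eventually_Cnorm2_ratio_le (a1 a2 a3 b1 b2 : Cplx) (e d : R) :
  Re a1 + Re a2 + Re a3 + 1 + d < e + Re b1 + Re b2 ->
  exists K, 1 <= K /\ forall r, K <= r ->
    (r + 1 + d) ^ 2 * (Cnorm2 (Cadd a1 (RtoC r)) * Cnorm2 (Cadd a2 (RtoC r))
                       * Cnorm2 (Cadd a3 (RtoC r)))
    <= (r * (r + e)) ^ 2 * (Cnorm2 (Cadd b1 (RtoC r)) * Cnorm2 (Cadd b2 (RtoC r))).
Proof.
  intro Hs.
  pose (q z := near_one_quadratic (2 * Re z) (Cnorm2 z)).
  pose proof (near_one_mul _ _ _ _ _ _ (near_one_mul _ _ _ _ _ _ (near_one_mul _ _ _ _ _ _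
                (near_one_quadratic (2 * (1 + d)) ((1 + d) ^ 2)) (q a1)) (q a2)) (q a3)) as NL.
  pose proof (near_one_mul _ _ _ _ _ _ (near_one_mul _ _ _ _ _ _
                (near_one_quadratic (2 * e) (e ^ 2)) (q b1)) (q b2)) as NR.
  destruct (near_one_eventually_le _ _ _ _ _ _ NL NR) as [K [HK1 HK]]; [lra|].
  exists K; split; [exact HK1|]; intros r Hr; specialize (HK r Hr); cbv beta in HK.
  rewrite !Cnorm2_add_RtoC by lra.
  (* both sides are [r ^ 8] times the corresponding side of [HK] *)
  assert (H8 : 0 < r ^ 8) by (apply pow_lt; lra).
  apply (Rmult_le_compat_l (r ^ 8)) in HK; [|lra].
  eapply Rle_trans; [|eapply Rle_trans; [exact HK|]]; right; field; lra.
Qed.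

(** * Convergence of [3F2] at 1 *)

Definition Cabs (z : Cplx) : R := sqrt (Cnorm2 z).

Lemma Cabs_ge0 (z : Cplx) : 0 <= Cabs z.
Proof. apply sqrt_pos. Qed.

Lemma Rabs_Re_le_Cabs (z : Cplx) : Rabs (Re z) <= Cabs z.
Proof. rewrite <- sqrt_Rsqr_abs; apply sqrt_le_1_alt; unfold Cnorm2, Rsqr; nra. Qed.

Lemma Rabs_Im_le_Cabs (z : Cplx) : Rabs (Im z) <= Cabs z.
Proof. rewrite <- sqrt_Rsqr_abs; apply sqrt_le_1_alt; unfold Cnorm2, Rsqr; nra. Qed.

Lemma mult_sqrt_le (A B x y : R) :
  0 <= A -> 0 <= B -> 0 <= x -> A ^ 2 * x <= B ^ 2 * y -> A * sqrt x <= B * sqrt y.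
Proof.
  intros HA HB Hx Hxy.
  rewrite <- (sqrt_pow2 A HA), <- (sqrt_pow2 B HB), <- !sqrt_mult_alt by (apply pow_le; assumption).
  apply sqrt_le_1_alt, Hxy.
Qed.

Lemma Re_F32_partial (a1 a2 a3 b1 b2 : Cplx) (n : nat) :
  Re (F32_partial a1 a2 a3 b1 b2 n) = sum_f_R0 (fun m => Re (F32_term a1 a2 a3 b1 b2 m)) n.
Proof. induction n as [|n IH]; cbn; [reflexivity | rewrite IH; reflexivity]. Qed.

Lemma Im_F32_partial (a1 a2 a3 b1 b2 : Cplx) (n : nat) :
  Im (F32_partial a1 a2 a3 b1 b2 n) = sum_f_R0 (fun m => Im (F32_term a1 a2 a3 b1 b2 m)) n.
Proof. induction n as [|n IH]; cbn; [reflexivity | rewrite IH; reflexivity]. Qed.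

Section F32_convergence.

Variables a1 a2 a3 b1 b2 : Cplx.
Hypothesis Hb1 : forall m, Cadd b1 (NtoC m) <> Czero.
Hypothesis Hb2 : forall m, Cadd b2 (NtoC m) <> Czero.

Let t := F32_term a1 a2 a3 b1 b2.

Lemma Cnorm2_F32_term_succ (m : nat) :
  Cnorm2 (t (S m)) * ((INR m + 1) ^ 2 * (Cnorm2 (Cadd b1 (NtoC m)) * Cnorm2 (Cadd b2 (NtoC m)))) =
  Cnorm2 (t m) * (Cnorm2 (Cadd a1 (NtoC m)) * Cnorm2 (Cadd a2 (NtoC m))
                  * Cnorm2 (Cadd a3 (NtoC m))).
Proof.
  assert (E : Cmul (t (S m)) (Cmul (NtoC (S m)) (Cmul (Cadd b1 (NtoC m)) (Cadd b2 (NtoC m)))) =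
              Cmul (t m) (Cmul (Cmul (Cadd a1 (NtoC m)) (Cadd a2 (NtoC m))) (Cadd a3 (NtoC m))))
    by (unfold t; rewrite F32_term_succ; field; auto using NtoC_S_neq0).
  apply (f_equal Cnorm2) in E.
  rewrite !Cnorm2_mul in E.
  replace (Cnorm2 (NtoC (S m))) with ((INR m + 1) ^ 2) in E
    by (unfold Cnorm2; cbn [NtoC RtoC Re Im]; rewrite S_INR; ring).
  rewrite <- E; ring.
Qed.

Lemma F32_abs_term_ratio (e d : R) :
  0 <= e -> 0 <= d -> Re a1 + Re a2 + Re a3 + 1 + d < e + Re b1 + Re b2 ->
  exists M, forall m, (M <= m)%nat ->
    (INR m + 1 + d) * (INR m + 1) * Cabs (t (S m)) <= INR m * (INR m + e) * Cabs (t m).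
Proof.
  intros He Hd Hs.
  destruct (eventually_Cnorm2_ratio_le a1 a2 a3 b1 b2 e d Hs) as [K [_ HK]].
  destruct (INR_unbounded K) as [M HM]; exists M; intros m Hm.
  assert (Hr : K <= INR m) by (pose proof (le_INR _ _ Hm); lra).
  specialize (HK (INR m) Hr); pose proof (Cnorm2_F32_term_succ m) as Hrec.
  change (RtoC (INR m)) with (NtoC m) in HK.
  pose proof (pos_INR m).
  assert (Hb : 0 < Cnorm2 (Cadd b1 (NtoC m)) * Cnorm2 (Cadd b2 (NtoC m)))
    by (apply Rmult_lt_0_compat; apply Cnorm2_pos; auto).
  apply mult_sqrt_le; try apply Cnorm2_ge0; try (apply Rmult_le_pos; lra).
  apply (Rmult_le_reg_r _ _ _ Hb).
  apply (Rmult_le_compat_r (Cnorm2 (t m))) in HK; [|apply Cnorm2_ge0].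
  transitivity ((INR m + 1 + d) ^ 2 * (Cnorm2 (t (S m)) * ((INR m + 1) ^ 2
      * (Cnorm2 (Cadd b1 (NtoC m)) * Cnorm2 (Cadd b2 (NtoC m)))))); [right; ring|].
  rewrite Hrec; lra.
Qed.

Lemma F32_sum_exists :
  Re a1 + Re a2 + Re a3 < Re b1 + Re b2 -> exists S, F32_sum a1 a2 a3 b1 b2 S.
Proof.
  intro Hs; set (s := Re b1 + Re b2 - Re a1 - Re a2 - Re a3).
  destruct (F32_abs_term_ratio 1 (s / 2)) as [M HM]; [lra | unfold s; lra | unfold s; lra |].
  assert (Hw : {l | Un_cv (sum_f_R0 (fun m => Cabs (t m))) l}).
  { apply (Raabe_summable _ (s / 2) M); [unfold s; lra | intro; apply Cabs_ge0 |].
    intros m Hm; specialize (HM m Hm); pose proof (pos_INR m).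
    apply (Rmult_le_reg_r (INR m + 1)); lra. }
  destruct (summable_of_Rabs_le (fun m => Re (t m)) _ (fun m => Rabs_Re_le_Cabs (t m)) Hw)
    as [lr Hr].
  destruct (summable_of_Rabs_le (fun m => Im (t m)) _ (fun m => Rabs_Im_le_Cabs (t m)) Hw)
    as [li Hi].
  exists (mkC lr li); split; cbn [Re Im].
  - apply Un_cv_ext with (2 := Hr); intro n; symmetry; apply Re_F32_partial.
  - apply Un_cv_ext with (2 := Hi); intro n; symmetry; apply Im_F32_partial.
Qed.

Lemma F32_term_decay :
  Re a1 + Re a2 + Re a3 + 1 < Re b1 + Re b2 -> Un_cv (fun m => INR m ^ 2 * Cabs (t m)) 0.
Proof.
  intro Hs; set (s := Re b1 + Re b2 - Re a1 - Re a2 - Re a3).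
  destruct (F32_abs_term_ratio 0 ((s - 1) / 2)) as [M HM]; [lra | unfold s; lra | unfold s; lra |].
  apply (Raabe_vanishing _ ((s - 1) / 2) M); [unfold s; lra | |].
  { intro; apply Rmult_le_pos; [apply pow_le, pos_INR | apply Cabs_ge0]. }
  intros m Hm; specialize (HM m Hm); rewrite S_INR.
  pose proof (pos_INR m); pose proof (Cabs_ge0 (t (S m))).
  nra.
Qed.

End F32_convergence.

Definition Cplx_cv (u : nat -> Cplx) (l : Cplx) : Prop :=
  Un_cv (fun n => Re (u n)) (Re l) /\ Un_cv (fun n => Im (u n)) (Im l).

Lemma Cplx_cv_ext (u v : nat -> Cplx) (l : Cplx) :
  (forall n, u n = v n) -> Cplx_cv u l -> Cplx_cv v l.
Proof.
  intros E [Hre Him]; split.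
  - apply Un_cv_ext with (2 := Hre); intro n; rewrite E; reflexivity.
  - apply Un_cv_ext with (2 := Him); intro n; rewrite E; reflexivity.
Qed.

Lemma Cplx_cv_add (u v : nat -> Cplx) (lu lv : Cplx) :
  Cplx_cv u lu -> Cplx_cv v lv -> Cplx_cv (fun n => Cadd (u n) (v n)) (Cadd lu lv).
Proof. intros [] []; split; apply CV_plus; assumption. Qed.

Lemma Cplx_cv_sub (u v : nat -> Cplx) (lu lv : Cplx) :
  Cplx_cv u lu -> Cplx_cv v lv -> Cplx_cv (fun n => Csub (u n) (v n)) (Csub lu lv).
Proof. intros [] []; split; apply CV_minus; assumption. Qed.

Lemma Cplx_cv_scal (c : Cplx) (u : nat -> Cplx) (l : Cplx) :
  Cplx_cv u l -> Cplx_cv (fun n => Cmul c (u n)) (Cmul c l).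
Proof.
  intros [Hre Him]; split; cbn; [apply CV_minus | apply CV_plus]; apply Un_cv_scal; assumption.
Qed.

Lemma Cplx_cv_unique (u : nat -> Cplx) (l1 l2 : Cplx) :
  Cplx_cv u l1 -> Cplx_cv u l2 -> l1 = l2.
Proof. intros [] []; apply Cplx_eq; eapply UL_sequence; eassumption. Qed.

Definition Cnorm1 (z : Cplx) : R := Rabs (Re z) + Rabs (Im z).

Lemma Cnorm1_ge0 (z : Cplx) : 0 <= Cnorm1 z.
Proof. unfold Cnorm1; pose proof (Rabs_pos (Re z)); pose proof (Rabs_pos (Im z)); lra. Qed.

Lemma Cnorm1_add (z w : Cplx) : Cnorm1 (Cadd z w) <= Cnorm1 z + Cnorm1 w.
Proof.
  unfold Cnorm1; cbn.
  pose proof (Rabs_triang (Re z) (Re w)); pose proof (Rabs_triang (Im z) (Im w)); lra.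
Qed.

Lemma Cnorm1_mul (z w : Cplx) : Cnorm1 (Cmul z w) <= Cnorm1 z * Cnorm1 w.
Proof.
  unfold Cnorm1; cbn; unfold Rminus.
  pose proof (Rabs_triang (Re z * Re w) (- (Im z * Im w))).
  pose proof (Rabs_triang (Re z * Im w) (Im z * Re w)).
  rewrite Rabs_Ropp, !Rabs_mult in *.
  pose proof (Rabs_pos (Re z)); pose proof (Rabs_pos (Im z));
    pose proof (Rabs_pos (Re w)); pose proof (Rabs_pos (Im w)).
  nra.
Qed.

Lemma Cnorm1_le_Cabs (z : Cplx) : Cnorm1 z <= 2 * Cabs z.
Proof. unfold Cnorm1; pose proof (Rabs_Re_le_Cabs z); pose proof (Rabs_Im_le_Cabs z); lra. Qed.

Lemma Cnorm1_NtoC_add (n : nat) (z : Cplx) :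
  (1 <= n)%nat -> Cnorm1 (Cadd (NtoC n) z) <= INR n * (1 + Cnorm1 z).
Proof.
  intro Hn; apply (le_INR 1) in Hn; cbn [INR] in Hn.
  eapply Rle_trans; [apply Cnorm1_add|].
  unfold Cnorm1 at 1; cbn [NtoC RtoC Re Im]; rewrite Rabs_R0, Rabs_right by lra.
  unfold Cnorm1; pose proof (Rabs_pos (Re z)); pose proof (Rabs_pos (Im z)); nra.
Qed.

Lemma Cplx_cv_0_of_Cnorm1 (u : nat -> Cplx) :
  Un_cv (fun n => Cnorm1 (u n)) 0 -> Cplx_cv u Czero.
Proof.
  intro H; split; cbn [Re Im Czero];
    apply (Un_cv_0_dominated _ (fun n => Cnorm1 (u n)) 1 0); try exact H;
    intros n _; unfold Cnorm1; pose proof (Rabs_pos (Re (u n))); pose proof (Rabs_pos (Im (u n)));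
    lra.
Qed.

Lemma Cplx_cv_quadratic_mul_0 (z1 z2 z3 : Cplx) (t : nat -> Cplx) :
  Un_cv (fun n => INR n ^ 2 * Cabs (t n)) 0 ->
  Cplx_cv (fun n => Cmul (Cadd (Cmul (Cadd (NtoC n) z1) (Cadd (NtoC n) z2)) z3) (t n)) Czero.
Proof.
  intro Ht; apply Cplx_cv_0_of_Cnorm1.
  apply (Un_cv_0_dominated _ (fun n => INR n ^ 2 * Cabs (t n))
           (2 * ((1 + Cnorm1 z1) * (1 + Cnorm1 z2) + Cnorm1 z3)) 1); [|exact Ht].
  intros n Hn; cbv beta; rewrite Rabs_right by apply Rle_ge, Cnorm1_ge0.
  pose proof (Cnorm1_NtoC_add n z1 Hn); pose proof (Cnorm1_NtoC_add n z2 Hn).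
  apply (le_INR 1) in Hn; cbn [INR] in Hn.
  set (p := Cadd (Cmul (Cadd (NtoC n) z1) (Cadd (NtoC n) z2)) z3).
  assert (Hp : Cnorm1 p <= ((1 + Cnorm1 z1) * (1 + Cnorm1 z2) + Cnorm1 z3) * INR n ^ 2).
  { unfold p; eapply Rle_trans; [apply Cnorm1_add|].
    eapply Rle_trans; [apply Rplus_le_compat_r, Cnorm1_mul|].
    pose proof (Cnorm1_ge0 z1); pose proof (Cnorm1_ge0 z2); pose proof (Cnorm1_ge0 z3).
    assert (Cnorm1 (Cadd (NtoC n) z1) * Cnorm1 (Cadd (NtoC n) z2)
            <= INR n * (1 + Cnorm1 z1) * (INR n * (1 + Cnorm1 z2)))
      by (apply Rmult_le_compat; auto using Cnorm1_ge0).
    assert (1 <= INR n ^ 2) by (replace 1 with (1 ^ 2) by ring; apply pow_incr; lra).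
    assert (Cnorm1 z3 <= Cnorm1 z3 * INR n ^ 2) by nra.
    nra. }
  eapply Rle_trans; [apply Cnorm1_mul|].
  pose proof (Cnorm1_le_Cabs (t n)); pose proof (Cnorm1_ge0 p); pose proof (Cnorm1_ge0 (t n)).
  pose proof (Cnorm1_ge0 z1); pose proof (Cnorm1_ge0 z2); pose proof (Cnorm1_ge0 z3).
  pose proof (Cabs_ge0 (t n)).
  assert (0 <= INR n ^ 2) by (apply pow_le; lra).
  nra.
Qed.

(** * The contiguous relation *)

Definition G_term (k : nat) (a b c : Cplx) : nat -> Cplx :=
  F32_term a (Cadd b (NtoC k)) (Cadd c (NtoC k)) (Cadd (Csub a b) Cone) (Cadd (Csub a c) Cone).

Definition G_partial (k : nat) (a b c : Cplx) : nat -> Cplx :=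
  F32_partial a (Cadd b (NtoC k)) (Cadd c (NtoC k)) (Cadd (Csub a b) Cone) (Cadd (Csub a c) Cone).

Lemma G_partial_succ (k : nat) (a b c : Cplx) (n : nat) :
  G_partial k a b c (S n) = Cadd (G_partial k a b c n) (G_term k a b c (S n)).
Proof. reflexivity. Qed.

Lemma G_sum_exists (k : nat) (a b c : Cplx) :
  not_nonpos_int (Cadd (Csub a b) Cone) -> not_nonpos_int (Cadd (Csub a c) Cone) ->
  2 * Re b + 2 * Re c + 2 * INR k < Re a + 2 -> exists S, G_sum k a b c S.
Proof.
  intros hb hc hs; apply F32_sum_exists; try (intro m; apply not_nonpos_int_add; assumption).
  cbn [Re Cadd Csub Copp NtoC RtoC Cone]; lra.
Qed.

Lemma G_term_decay (k : nat) (a b c : Cplx) :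
  not_nonpos_int (Csub a b) -> not_nonpos_int (Csub a c) ->
  2 * Re b + 2 * Re c + 2 * INR k + 1 < Re a ->
  Un_cv (fun m => INR m ^ 2 * Cabs (G_term (S k) a b c m)) 0.
Proof.
  intros hb hc hs; apply F32_term_decay;
    try (intro m; rewrite Cadd_1_NtoC; apply not_nonpos_int_add; assumption).
  cbn [Re Cadd Csub Copp NtoC RtoC Cone]; rewrite S_INR; lra.
Qed.

Section Contiguity.

Variables (k : nat) (a b c : Cplx).

Lemma G_term_shift_up (m : nat) :
  Cmul a (G_term k (Cadd a Cone) (Cadd b Cone) (Cadd c Cone) m) =
  Cmul (Cadd a (NtoC m)) (G_term (S k) a b c m).
Proof.
  unfold G_term, F32_term, Cdiv; rewrite !Cadd_1_NtoC.
  replace (Cadd (Csub (Cadd a Cone) (Cadd b Cone)) Cone) with (Cadd (Csub a b) Cone) by ring.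
  replace (Cadd (Csub (Cadd a Cone) (Cadd c Cone)) Cone) with (Cadd (Csub a c) Cone) by ring.
  set (u := Cinv _).
  set (pb := poch (Cadd b (NtoC (S k))) m); set (pc := poch (Cadd c (NtoC (S k))) m).
  transitivity (Cmul (Cmul (Cmul (Cmul a (poch (Cadd a Cone) m)) pb) pc) u); [ring|].
  rewrite poch_shift; ring.
Qed.

Lemma G_term_shift_down (m : nat) :
  Csub a b <> Czero -> Csub a c <> Czero ->
  G_term k (Csub a Cone) b c (S m) =
  Cdiv (Cmul (Cmul (Cmul (Csub a Cone) (Cadd b (NtoC k))) (Cadd c (NtoC k))) (G_term (S k) a b c m))
       (Cmul (Cmul (Csub a b) (Csub a c)) (NtoC (S m))).
Proof.
  intros Hab Hac; unfold G_term, F32_term, Cdiv.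
  replace (Cadd (Csub (Csub a Cone) b) Cone) with (Csub a b) by ring.
  replace (Cadd (Csub (Csub a Cone) c) Cone) with (Csub a c) by ring.
  rewrite !poch_succ, !Cadd_NtoC_1.
  replace (Cadd (Csub a Cone) Cone) with a by ring.
  change (Factorial.fact (S m)) with (S m * Factorial.fact m)%nat; rewrite NtoC_mul.
  set (D := Cmul (Cmul (NtoC (Factorial.fact m)) (poch (Cadd (Csub a b) Cone) m))
                 (poch (Cadd (Csub a c) Cone) m)).
  replace (Cmul (Cmul (Cmul (NtoC (S m)) (NtoC (Factorial.fact m)))
                      (Cmul (Csub a b) (poch (Cadd (Csub a b) Cone) m)))
                (Cmul (Csub a c) (poch (Cadd (Csub a c) Cone) m)))
    with (Cmul (Cmul (Cmul (Csub a b) (Csub a c)) (NtoC (S m))) D) by (unfold D; ring).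
  rewrite !Cinv_mul; ring.
Qed.

(* [k (b + c + k)] times the relation of the theorem; [x2] is kept multiplied by [a] so that
   [G_term_shift_up] applies directly. *)
Definition contiguous_comb (x1 x2 x3 : Cplx) : Cplx :=
  Cadd (Csub (Cmul (Cmul (NtoC k) (Cadd (Cadd b c) (NtoC k))) x1)
             (Cmul (Csub (Csub a Cone) (Cmul (RtoC 2) (Cadd (Cadd b c) (NtoC k)))) (Cmul a x2)))
       (Cmul (Cmul (Csub a b) (Csub a c)) x3).

Lemma contiguous_comb_add (x1 x2 x3 y1 y2 y3 : Cplx) :
  contiguous_comb (Cadd x1 y1) (Cadd x2 y2) (Cadd x3 y3) =
  Cadd (contiguous_comb x1 x2 x3) (contiguous_comb y1 y2 y3).
Proof. unfold contiguous_comb; ring. Qed.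

Definition contiguous_factor (n : nat) : Cplx :=
  Cadd (Cmul (Cadd (NtoC n) a)
             (Cadd (NtoC n) (Cadd (Cadd (Cadd b (NtoC k)) (Cadd c (NtoC k))) Cone)))
       (Cmul (Cadd b (NtoC k)) (Cadd c (NtoC k))).

Hypothesis hab : not_nonpos_int (Csub a b).
Hypothesis hac : not_nonpos_int (Csub a c).

Lemma contiguous_comb_G_term_succ (n : nat) :
  contiguous_comb (G_term (S k) a b c (S n))
                  (G_term k (Cadd a Cone) (Cadd b Cone) (Cadd c Cone) (S n))
                  (G_term k (Csub a Cone) b c (S n)) =
  Csub (Cmul (contiguous_factor (S n)) (G_term (S k) a b c (S n)))
       (Cmul (contiguous_factor n) (G_term (S k) a b c n)).
Proof.
  pose proof (not_nonpos_int_neq0 _ hab) as Hab; pose proof (not_nonpos_int_neq0 _ hac) as Hac.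
  pose proof (not_nonpos_int_add _ (S n) hab) as Hbn.
  pose proof (not_nonpos_int_add _ (S n) hac) as Hcn.
  rewrite <- Cadd_1_NtoC in Hbn, Hcn.
  assert (Hn : Cadd (NtoC n) Cone <> Czero) by (rewrite <- NtoC_S; apply NtoC_S_neq0).
  unfold contiguous_comb, contiguous_factor.
  rewrite G_term_shift_up, G_term_shift_down by assumption.
  unfold G_term; rewrite F32_term_succ.
  replace (RtoC 2) with (Cadd Cone Cone) by Cplx_ext.
  rewrite !NtoC_S; field; tauto.
Qed.

Lemma contiguous_comb_G_partial (n : nat) :
  contiguous_comb (G_partial (S k) a b c n)
                  (G_partial k (Cadd a Cone) (Cadd b Cone) (Cadd c Cone) n)
                  (G_partial k (Csub a Cone) b c n) =
  Cmul (contiguous_factor n) (G_term (S k) a b c n).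
Proof.
  induction n as [|n IH].
  - unfold G_partial, G_term, contiguous_comb, contiguous_factor; cbn [F32_partial].
    rewrite !F32_term_0, NtoC_0; replace (RtoC 2) with (Cadd Cone Cone) by Cplx_ext; ring.
  - rewrite !G_partial_succ, contiguous_comb_add, IH, contiguous_comb_G_term_succ; ring.
Qed.

Lemma contiguous_comb_G_sum (S1 S2 S3 : Cplx) :
  2 * Re b + 2 * Re c + 2 * INR k + 1 < Re a ->
  G_sum (S k) a b c S1 -> G_sum k (Cadd a Cone) (Cadd b Cone) (Cadd c Cone) S2 ->
  G_sum k (Csub a Cone) b c S3 ->
  contiguous_comb S1 S2 S3 = Czero.
Proof.
  intros hs H1 H2 H3.
  apply (Cplx_cv_unique (fun n => contiguous_comb (G_partial (S k) a b c n)
                         (G_partial k (Cadd a Cone) (Cadd b Cone) (Cadd c Cone) n)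
                         (G_partial k (Csub a Cone) b c n))).
  - unfold contiguous_comb.
    apply Cplx_cv_add; [apply Cplx_cv_sub|]; repeat apply Cplx_cv_scal; assumption.
  - apply Cplx_cv_ext with (fun n => Cmul (contiguous_factor n) (G_term (S k) a b c n)).
    + intro n; symmetry; apply contiguous_comb_G_partial.
    + apply Cplx_cv_quadratic_mul_0, G_term_decay; assumption.
Qed.

Lemma G_sums_exist :
  2 * Re b + 2 * Re c + 2 * INR k + 1 < Re a ->
  exists S1 S2 S3 : Cplx,
    G_sum (S k) a b c S1 /\
    G_sum k (Cadd a Cone) (Cadd b Cone) (Cadd c Cone) S2 /\
    G_sum k (Csub a Cone) b c S3.
Proof.
  intro hs.
  pose proof (not_nonpos_int_succ _ hab) as hab1; pose proof (not_nonpos_int_succ _ hac) as hac1.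
  destruct (G_sum_exists (S k) a b c hab1 hac1) as [S1 HS1]; [rewrite S_INR; lra|].
  destruct (G_sum_exists k (Cadd a Cone) (Cadd b Cone) (Cadd c Cone)) as [S2 HS2].
  { replace (Cadd (Csub (Cadd a Cone) (Cadd b Cone)) Cone) with (Cadd (Csub a b) Cone) by ring.
    exact hab1. }
  { replace (Cadd (Csub (Cadd a Cone) (Cadd c Cone)) Cone) with (Cadd (Csub a c) Cone) by ring.
    exact hac1. }
  { cbn [Re Cadd Cone]; lra. }
  destruct (G_sum_exists k (Csub a Cone) b c) as [S3 HS3].
  { replace (Cadd (Csub (Csub a Cone) b) Cone) with (Csub a b) by ring; exact hab. }
  { replace (Cadd (Csub (Csub a Cone) c) Cone) with (Csub a c) by ring; exact hac. }
  { cbn [Re Csub Cadd Copp Cone]; lra. }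
  exists S1, S2, S3; auto.
Qed.

End Contiguity.

Theorem mainTheorem10 (k : nat) (a b c : Cplx)
  (hk : (1 <= k)%nat)
  (h1 : not_nonpos_int (Csub a b))
  (h2 : not_nonpos_int (Csub a c))
  (h3 : not_nonpos_int (Cadd (Csub a b) Cone))
  (h4 : not_nonpos_int (Cadd (Csub a c) Cone))
  (h5 : Cadd (Cadd b c) (NtoC k) <> Czero)
  (h6 : Re (Csub (Csub (Csub a (Cmul (RtoC 2) b)) (Cmul (RtoC 2) c))
                 (Cmul (RtoC 2) (NtoC k))) > 1) :
  exists S1 S2 S3 : Cplx,
    G_sum (S k) a b c S1 /\
    G_sum k (Cadd a Cone) (Cadd b Cone) (Cadd c Cone) S2 /\
    G_sum k (Csub a Cone) b c S3 /\
    S1 = Csub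
           (Cmul (Cdiv (Cmul a (Csub (Csub a Cone) (Cmul (RtoC 2) (Cadd (Cadd b c) (NtoC k)))))
                       (Cmul (NtoC k) (Cadd (Cadd b c) (NtoC k)))) S2)
           (Cmul (Cdiv (Cmul (Csub a b) (Csub a c))
                       (Cmul (NtoC k) (Cadd (Cadd b c) (NtoC k)))) S3).
Proof.
  assert (hs : 2 * Re b + 2 * Re c + 2 * INR k + 1 < Re a)
    by (cbn [Re Im Csub Cadd Copp Cmul RtoC NtoC] in h6; lra).
  destruct (G_sums_exist k a b c h1 h2 hs) as (S1 & S2 & S3 & HS1 & HS2 & HS3).
  exists S1, S2, S3; do 3 (split; [assumption|]).
  pose proof (contiguous_comb_G_sum k a b c h1 h2 S1 S2 S3 hs HS1 HS2 HS3) as Hcomb.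
  assert (Hk : NtoC k <> Czero) by (destruct k; [lia | apply NtoC_S_neq0]).
  unfold contiguous_comb in Hcomb.
  (* divide the vanishing combination by [k (b + c + k)] *)
  match type of Hcomb with ?Z = _ =>
    transitivity (Csub S1 (Cdiv Z (Cmul (NtoC k) (Cadd (Cadd b c) (NtoC k))))) end.
  - rewrite Hcomb; unfold Cdiv; ring.
  - field; split; assumption.
Qed.
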